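(* Let $0\le a<b$ and $d\in\mathbb{R}$. Let $g$ be a complex-valued $C^1$ function on $[a,b]$ and $I$ a real-valued $C^2$ function on $[a,b]$ such that for some $\alpha>0$ the Lebesgue measure of $\{x\in[a,b]:I'(x)\in2\pi\mathbb{Z}+[-\delta,\delta]\}$ is $\mathcal{O}(\delta^\alpha)$ as $\delta\to0^+$. Let $f:\mathbb{Z}_{\ge0}\to\mathbb{C}$ satisfy $f(\lfloor tN\rfloor)=e^{iNI(t)}g(t)N^d+o(N^d)$ as $N\to\infty$ for each $t>0$, uniformly on $[a,b]$, i.e. \[ \sup_{t\in[a,b]}\frac{\big|f(\lfloor tN\rfloor)-e^{iNI(t)}g(t)N^d\big|}{N^d}\to0\quad(N\to\infty). \] Then, as $N\to\infty$, $\displaystyle\sum_{x=\lfloor aN\rfloor+1}^{\lfloor bN\rfloor}f(x)=o(N^{d+1})$. *)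

From HB Require Import structures.
From mathcomp Require Import all_boot all_order all_algebra.
From mathcomp Require Import all_classical all_reals all_analysis.
From mathcomp Require Import complex.

Set Implicit Arguments.
Unset Strict Implicit.
Unset Printing Implicit Defensive.

Import Order.TTheory GRing.Theory Num.Theory.
Import numFieldNormedType.Exports.
Local Open Scope classical_set_scope.
Local Open Scope ring_scope.

(* h : R -> R is C^1 on the closed interval [a,b]: h is continuous on [a,b],
   differentiable on ]a,b[, and its derivative extends to a continuous
   function on [a,b] (equivalently: one-sided derivatives at the endpoints and
   continuous derivative on [a,b]). *)
Definition C1_on {R : realType} (a b : R) (h : R -> R) : Prop :=
  {within `[a, b], continuous h} /\
  {in `]a, b[, forall x, derivable h x 1} /\
  exists dh : R -> R,
    {within `[a, b], continuous dh} /\ {in `]a, b[, forall x, dh x = derive1 h x}.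

Definition C2_on {R : realType} (a b : R) (h : R -> R) : Prop :=
  C1_on a b h /\
  exists dh : R -> R, {in `]a, b[, forall x, dh x = derive1 h x} /\ C1_on a b dh.

Definition C1_on_cplx {R : realType} (a b : R) (g : R -> R[i]) : Prop :=
  C1_on a b (fun x => complex.Re (g x)) /\ C1_on a b (fun x => complex.Im (g x)).

Definition expi {R : realType} (x : R) : R[i] := Complex (cos x) (sin x).

Definition near_2piZ_set {R : realType} (a b : R) (I : R -> R) (delta : R)
  : set R :=
  [set x | x \in `[a, b] /\
           exists k : int, `|derive1 I x - 2 * pi * k%:~R| <= delta].

Definition cabs {R : realType} (z : R[i]) : R :=
  Num.sqrt (complex.Re z ^+ 2 + complex.Im z ^+ 2).

From HB Require Import structures.
From mathcomp Require Import all_boot all_order all_algebra.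
From mathcomp Require Import all_classical all_reals all_analysis.
From mathcomp Require Import complex.
From mathcomp Require Import ring lra.
Import Order.TTheory GRing.Theory Num.Theory.
Import numFieldNormedType.Exports.
Local Open Scope classical_set_scope.
Local Open Scope ring_scope.

(* Split [a, b] into cells so short that J = I' varies by at most delta on
   each of them.  On a cell where J stays delta-away from 2 pi Z, consecutive
   phases N I(x/N) differ by nearly J, so e^{i (phase increment)} stays away
   from 1 and summation by parts bounds the cell sum by O(1) plus O(1/N) per
   term.  The other cells lie in {I' in 2 pi Z + [-2 delta, 2 delta]}, of total
   length O(delta^alpha), and are bounded trivially.  Hence the sum of the main
   terms e^{i N I(x/N)} g(x/N) is o(N), while the o(N^d) errors contribute
   o(N^(d+1)). *)

Section ComplexModulus.
Context {R : realType}.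
Implicit Types x y z : R[i].

Lemma cabs_normc z : ((cabs z)%:C = `|z|)%C.
Proof. by rewrite normc_def. Qed.

Lemma cabs_ge0 z : 0 <= cabs z.
Proof. exact: sqrtr_ge0. Qed.

Lemma cabs0 : cabs (0 : R[i]) = 0.
Proof. by rewrite /cabs /= expr0n /= addr0 sqrtr0. Qed.

Lemma cabsD x y : cabs (x + y) <= cabs x + cabs y.
Proof. by rewrite -lecR rmorphD /= !cabs_normc ler_normD. Qed.

Lemma cabsM x y : cabs (x * y) = cabs x * cabs y.
Proof. by apply: complexI; rewrite rmorphM /= !cabs_normc normrM. Qed.

Lemma cabsN x : cabs (- x) = cabs x.
Proof. by apply: complexI; rewrite !cabs_normc normrN. Qed.

Lemma cabsV x : cabs x^-1 = (cabs x)^-1.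
Proof. by apply: complexI; rewrite fmorphV /= !cabs_normc normfV. Qed.

Lemma cabs_real (r : R) : cabs (r%:C)%C = `|r|.
Proof. by rewrite /cabs /= expr0n /= addr0 sqrtr_sqr. Qed.

Lemma cabs_le_ReIm z : cabs z <= `|complex.Re z| + `|complex.Im z|.
Proof.
rewrite /cabs -[leRHS]ger0_norm ?addr_ge0 // -sqrtr_sqr ler_wsqrtr //.
rewrite -[complex.Re z ^+ 2]real_normK ?num_real //.
rewrite -[complex.Im z ^+ 2]real_normK ?num_real //.
have := normr_ge0 (complex.Re z); have := normr_ge0 (complex.Im z); nra.
Qed.

Lemma cabs_sum (I : Type) (s : seq I) (P : pred I) (F : I -> R[i]) :
  cabs (\sum_(i <- s | P i) F i) <= \sum_(i <- s | P i) cabs (F i).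
Proof.
elim/big_rec2: _ => [|i y1 y2 _ IH]; first by rewrite cabs0.
by apply: le_trans (cabsD _ _) _; rewrite lerD2l.
Qed.

Lemma cabs_sum_nat_le {F : nat -> R[i]} {m n : nat} (B : R) :
  (forall k, (m <= k < n)%N -> cabs (F k) <= B) ->
  cabs (\sum_(m <= k < n) F k) <= (n - m)%:R * B.
Proof.
move=> FB; apply: le_trans (cabs_sum _ _ _ _) _.
rewrite mulr_natl -sumr_const_nat big_nat_cond [leRHS]big_nat_cond.
by apply: ler_sum => k /andP[kmn _]; exact: FB.
Qed.

End ComplexModulus.

Section Lipschitz.
Context {R : realType}.
Implicit Types a b s t x L : R.

Lemma subitv_oo_in {a b s t} : s \in `[a, b] -> t \in `[a, b] ->
  {subset `]s, t[ <= `]a, b[}.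
Proof.
rewrite !in_itv /= => /andP[sa _] /andP[_ tb].
by apply: subitvP; rewrite subitvE !bnd_simp sa tb.
Qed.

Lemma subitv_cc_in {a b s t} : s \in `[a, b] -> t \in `[a, b] ->
  `[s, t] `<=` `[a, b].
Proof.
rewrite !in_itv /= => /andP[sa _] /andP[_ tb].
by apply: subset_itvScc; rewrite !bnd_simp.
Qed.

Lemma lipschitz_of_is_derive (h dh : R -> R) a b L :
  {within `[a, b], continuous h} ->
  {in `]a, b[, forall x, is_derive x 1 h (dh x)} ->
  {in `]a, b[, forall x, `|dh x| <= L} ->
  {in `[a, b] &, forall s t, `|h s - h t| <= L * `|s - t|}.
Proof.
move=> hc hd dhL.
suff le_st s t : s \in `[a, b] -> t \in `[a, b] -> s < t ->
    `|h t - h s| <= L * `|t - s|.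
  move=> s t sab tab; case: (ltgtP s t) => [st|ts|->].
  - by rewrite distrC [`|s - t|]distrC le_st.
  - exact: le_st.
  - by rewrite !subrr !normr0 mulr0.
move=> sab tab st.
have ab_in := subitv_oo_in sab tab.
have [c cst ->] := MVT st (fun x xst => hd x (ab_in x xst))
  (continuous_subspaceW (subitv_cc_in sab tab) hc).
by rewrite normrM ler_wpM2r // dhL // ab_in.
Qed.

Lemma cos_lipschitz s t : `|cos s - cos t| <= `|s - t|.
Proof.
rewrite -[leRHS]mul1r.
apply: (@lipschitz_of_is_derive _ (fun x => - sin x) (Num.min s t) (Num.max s t)).
- by apply: continuous_subspaceT; exact: continuous_cos.
- by move=> x _; exact: is_derive_cos.
- by move=> x _; rewrite normrN sin_max.
- by rewrite in_itv /= ge_min le_max lexx !orTb.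
- by rewrite in_itv /= ge_min le_max lexx !orbT.
Qed.

Lemma sin_lipschitz s t : `|sin s - sin t| <= `|s - t|.
Proof.
rewrite -[leRHS]mul1r.
apply: (@lipschitz_of_is_derive _ cos (Num.min s t) (Num.max s t)).
- by apply: continuous_subspaceT; exact: continuous_sin.
- by move=> x _; exact: is_derive_sin.
- by move=> x _; rewrite cos_max.
- by rewrite in_itv /= ge_min le_max lexx !orTb.
- by rewrite in_itv /= ge_min le_max lexx !orbT.
Qed.

Lemma C1_on_lipschitz {a b} {h : R -> R} : a <= b -> C1_on a b h ->
  exists2 L, 0 <= L & {in `[a, b] &, forall s t, `|h s - h t| <= L * `|s - t|}.
Proof.
move=> ab [hc [hd [dh [dhc dhE]]]].
have [cM cMab HM] := EVT_max ab dhc.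
have [cm cmab Hm] := EVT_min ab dhc.
have dhL : {in `]a, b[, forall x, `|derive1 h x| <= `|dh cM| + `|dh cm|}.
  move=> x xab; have x_in : x \in `[a, b] by apply: subitvP xab; rewrite subitvE !bnd_simp.
  have := HM x x_in; have := Hm x x_in; have := ler_norm (dh cM).
  have := normr_ge0 (dh cM); have := normr_ge0 (dh cm).
  have := ler_norm (- dh cm); rewrite normrN -dhE // ler_norml => *.
  by apply/andP; split; lra.
have hder : {in `]a, b[, forall x, is_derive x 1 h (derive1 h x)}.
  by move=> x xab; rewrite derive1E; exact/derivableP/hd.
exists (`|dh cM| + `|dh cm|); first by rewrite addr_ge0.
exact: lipschitz_of_is_derive hc hder dhL.
Qed.

Lemma C1_on_cplx_lipschitz {a b} {g : R -> R[i]} : a <= b -> C1_on_cplx a b g ->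
  exists2 L, 0 <= L & {in `[a, b] &, forall s t, cabs (g s - g t) <= L * `|s - t|}.
Proof.
move=> ab [gRe gIm].
have [L1 L10 H1] := C1_on_lipschitz ab gRe.
have [L2 L20 H2] := C1_on_lipschitz ab gIm.
exists (L1 + L2) => [|s t sab tab]; first by rewrite addr_ge0.
apply: le_trans (cabs_le_ReIm _) _; rewrite mulrDl.
have := H1 s t sab tab; have := H2 s t sab tab.
by case: (g s) => u1 v1; case: (g t) => u2 v2 /= h2 h1; exact: lerD.
Qed.

Lemma C1_on_cplx_bounded {a b} {g : R -> R[i]} : a <= b -> C1_on_cplx a b g ->
  exists2 G, 0 <= G & {in `[a, b], forall t, cabs (g t) <= G}.
Proof.
move=> ab /(C1_on_cplx_lipschitz ab) [L L0 gL].
have a_in : a \in `[a, b] by rewrite in_itv /= lexx ab.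
exists (cabs (g a) + L * (b - a)) => [|t tab].
  by rewrite addr_ge0 ?cabs_ge0 ?mulr_ge0 ?subr_ge0.
rewrite -[g t](subrK (g a)) addrC; apply: le_trans (cabsD _ _) _.
rewrite lerD2l; apply: le_trans (gL _ _ tab a_in) _.
move: tab; rewrite in_itv /= => /andP[ta tb].
by rewrite ler_wpM2l // ger0_norm ?subr_ge0 // lerD2r.
Qed.

End Lipschitz.

Section Expi.
Context {R : realType}.
Implicit Types x y delta : R.

Lemma expiD x y : expi (x + y) = expi x * expi y.
Proof.
rewrite /expi cosD sinD; apply/eqP; rewrite eq_complex /=.
by apply/andP; split; apply/eqP; ring.
Qed.

Lemma cabs_expi x : cabs (expi x) = 1.
Proof. by rewrite /cabs /expi /= cos2Dsin2 sqrtr1. Qed.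

Lemma cabs_expiB x y : cabs (expi x - expi y) <= 2 * `|x - y|.
Proof.
apply: le_trans (cabs_le_ReIm _) _; rewrite /expi /= mulr2n mulrDl mul1r.
by rewrite lerD // ?cos_lipschitz ?sin_lipschitz.
Qed.

Lemma cabs_expi_sub1 x : cabs (expi x - 1) = Num.sqrt (2 - 2 * cos x).
Proof.
rewrite /cabs /expi /=; congr Num.sqrt.
have := cos2Dsin2 x; rewrite oppr0 addr0; lra.
Qed.

Lemma cos_sin_2pi_int (k : int) :
  cos (2 * pi * k%:~R) = 1 :> R /\ sin (2 * pi * k%:~R) = 0 :> R.
Proof.
have cos_sin_nat (n : nat) : cos (2 * pi * n%:R) = 1 :> R /\ sin (2 * pi * n%:R) = 0 :> R.
  have -> : 2 * pi * n%:R = 0 + (pi *+ 2) *+ n :> R by rewrite add0r mulr_natr mulr_natl.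
  by rewrite (periodicn (@cosD2pi R)) (periodicn (@sinD2pi R)) cos0 sin0.
case: k => n; first exact: cos_sin_nat.
rewrite NegzE mulrNz mulrN cosN sinN.
by have [-> ->] := cos_sin_nat n.+1; rewrite oppr0.
Qed.

Lemma cos_le_far_from_2piZ {delta x} : 0 < delta <= pi ->
  ~ (exists k : int, `|x - 2 * pi * k%:~R| <= delta) -> cos x <= cos delta.
Proof.
move=> /andP[d0 dpi] far.
have pi2_gt0 : 0 < 2 * (pi : R) by rewrite mulr_gt0 ?pi_gt0.
pose u := (x + pi) / (2 * pi); pose k := Num.floor u.
have ku : 2 * pi * u = x + pi by rewrite mulrC divfK ?gt_eqF.
have k_le : 2 * pi * k%:~R <= x + pi by rewrite -ku ler_pM2l ?floor_le.
have k_gt : x + pi < 2 * pi * k%:~R + 2 * pi.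
  by rewrite -ku -[X in _ < _ + X]mulr1 -mulrDr ltr_pM2l // -[1]/(1%:~R) -intrD floorD1_gt.
pose y := x - 2 * pi * k%:~R.
have -> : cos x = cos `|y|.
  by rewrite cos_norm /y cosB; have [-> ->] := cos_sin_2pi_int k; rewrite mulr1 mulr0 addr0.
have y_gt : delta < `|y| by rewrite ltNge; apply/negP => ?; apply: far; exists k.
have y_le : `|y| <= pi by rewrite ler_norml /y; apply/andP; split; lra.
rewrite ltW // ltr_cos // in_itv /= ?(ltW d0) ?dpi ?normr_ge0 //.
Qed.

Lemma cabs_expi_sub1_gt0 {delta} : 0 < delta <= pi -> 0 < cabs (expi delta - 1).
Proof.
move=> /andP[d0 dpi]; rewrite cabs_expi_sub1 sqrtr_gt0.
have := @ltr_cos R 0 delta; rewrite !in_itv /= lexx (ltW d0) dpi pi_ge0 cos0 d0.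
move=> /(_ isT isT) /esym; lra.
Qed.

Lemma cabs_expi_sub1_far delta x : 0 < delta <= pi ->
  ~ (exists k : int, `|x - 2 * pi * k%:~R| <= delta) ->
  cabs (expi delta - 1) <= cabs (expi x - 1).
Proof.
move=> dpi far; rewrite !cabs_expi_sub1 ler_wsqrtr //.
have := cos_le_far_from_2piZ dpi far; lra.
Qed.

End Expi.

Section AbelSummation.
Context {R : realType}.
Implicit Types (v c q : nat -> R[i]) (m n : nat).

Lemma abel_summation v q m n : (m <= n)%N ->
  \sum_(m <= k < n.+1) (v k.+1 * q k - v k * q k) =
  v n.+1 * q n - v m * q m - \sum_(m <= k < n) v k.+1 * (q k.+1 - q k).
Proof.
move=> mn; rewrite big_nat_recr //=.
rewrite (eq_bigr (fun k => (v k.+1 * q k.+1 - v k * q k) - v k.+1 * (q k.+1 - q k)));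
  last by move=> k _; ring.
by rewrite sumrB (telescope_sumr (fun k => v k * q k) mn); ring.
Qed.

Lemma cabs_abel_sum_le v c q m n (Q D : R) : 0 <= Q -> 0 <= D ->
  (forall k, cabs (v k) = 1) ->
  (forall k, (m <= k < n)%N -> v k * c k = v k.+1 * q k - v k * q k) ->
  (forall k, (m <= k < n)%N -> cabs (q k) <= Q) ->
  (forall k, (m <= k)%N -> (k.+1 < n)%N -> cabs (q k.+1 - q k) <= D) ->
  cabs (\sum_(m <= k < n) v k * c k) <= 2 * Q + (n - m)%:R * D.
Proof.
move=> Q0 D0 v1 vcq qQ dqD.
have [|nm] := ltnP m n; last by rewrite big_geq // cabs0 addr_ge0 ?mulr_ge0.
case: n vcq qQ dqD => // l vcq qQ dqD; rewrite ltnS => ml.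
rewrite (eq_big_nat _ _ vcq) abel_summation //.
have bd_ends : cabs (v l.+1 * q l - v m * q m) <= Q + Q.
  apply: le_trans (cabsD _ _) _; rewrite cabsN !cabsM !v1 !mul1r.
  by rewrite lerD ?qQ ?ml ?leqnn.
have bd_sum : cabs (\sum_(m <= k < l) v k.+1 * (q k.+1 - q k)) <= (l - m)%:R * D.
  by apply: cabs_sum_nat_le => k /andP[mk kl]; rewrite cabsM v1 mul1r dqD // ltnS.
have bd_len : (l - m)%:R * D <= (l.+1 - m)%:R * D.
  by rewrite ler_wpM2r // ler_nat leq_sub2r.
by apply: le_trans (cabsD _ _) _; rewrite cabsN; lra.
Qed.

End AbelSummation.

Lemma big_nat_split_mono {V : zmodType} {F : nat -> V} {p : nat -> nat} {M : nat} :
  (forall j, (p j <= p j.+1)%N) ->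
  \sum_(p 0 <= x < p M) F x = \sum_(j < M) \sum_(p j <= x < p j.+1) F x.
Proof.
move=> p_mono; have p0_le j : (p 0 <= p j)%N by elim: j => // j; move/leq_trans; apply.
elim: M => [|M IH]; first by rewrite big_geq // big_ord0.
by rewrite big_ord_recr /= -IH -big_cat_nat.
Qed.

Section Sampling.
Context {R : realType}.
Implicit Types (N x : nat).

(* For 0 <= c <= c', the indices x in [first_after N c, first_after N c') are
   exactly those with c < x / N <= c'. *)
Definition first_after N (c : R) : nat := Num.truncn (c * N%:R) + 1.

Lemma first_after_le N (c c' : R) : 0 <= c -> c <= c' -> (first_after N c <= first_after N c')%N.
Proof. by move=> c0 cc'; rewrite leq_add2r le_truncn // ler_wpM2r. Qed.

Lemma sample_in_itv {N x} {c c' : R} : (0 < N)%N -> 0 <= c -> 0 <= c' ->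
  (first_after N c <= x < first_after N c')%N -> c < x%:R / N%:R <= c'.
Proof.
move=> N0 c0 c'0; rewrite /first_after !addn1 ltnS => /andP[cx xc'].
have N0' : 0 < (N%:R : R) by rewrite ltr0n.
rewrite ltr_pdivlMr // ler_pdivrMr //; apply/andP; split.
  by apply: lt_le_trans (truncnS_gt _) _; rewrite ler_nat.
by apply: le_trans (_ : (Num.truncn (c' * N%:R))%:R <= _); rewrite ?ler_nat ?truncn_le ?mulr_ge0.
Qed.

Lemma card_first_after N {c c' : R} : 0 <= c -> c <= c' ->
  ((first_after N c' - first_after N c)%:R : R) <= (c' - c) * N%:R + 1.
Proof.
move=> c0 cc'; rewrite /first_after subnDr natrB; last by rewrite le_truncn // ler_wpM2r.
have := truncnS_gt (c * N%:R).
have : ((Num.truncn (c' * N%:R))%:R : R) <= c' * N%:R.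
  by rewrite truncn_le mulr_ge0 // (le_trans c0).
rewrite -nat1r mulrBl; lra.
Qed.

Lemma sampleS N x : (x.+1%:R / N%:R : R) = x%:R / N%:R + N%:R^-1.
Proof. by rewrite -addn1 natrD mulrDl mul1r. Qed.

Lemma truncn_sample N x : (0 < N)%N -> Num.truncn (x%:R / N%:R * N%:R : R) = x.
Proof. by move=> N0; rewrite divfK ?pnatr_eq0 -?lt0n // natrK. Qed.

End Sampling.

Section Measure.
Context {R : realType}.

Lemma lebesgue_measure_subset {A B : set R} :
  A `<=` B -> (lebesgue_measure A <= lebesgue_measure B)%E.
Proof.
move=> AB; rewrite /lebesgue_measure /lebesgue_stieltjes_measure /measure_extension.
exact: le_outer_measure.
Qed.

Lemma cells_length_le_measure (a h : R) (M : nat) (P : {pred 'I_M}) (S : set R) : 0 < h ->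
  (forall j : 'I_M, P j -> `](a + j%:R * h), (a + j.+1%:R * h)[ `<=` S) ->
  ((\sum_(j < M | P j) h)%:E <= lebesgue_measure S)%E.
Proof.
move=> h0 cellS.
pose cell (j : 'I_M) := `](a + j%:R * h), (a + j.+1%:R * h)[%classic.
have cell_h j : (h%:E <= lebesgue_measure (cell j))%E.
  rewrite lebesgue_measure_itv /= lte_fin ltrD2l ltr_pM2r // ltr_nat ltnSn.
  rewrite -EFinB lee_fin -nat1r mulrDl mul1r; lra.
have cell_disj i j : P i -> P j -> cell i `&` cell j !=set0 -> i = j.
  move=> _ _ [x []]; rewrite /cell /= !in_itv /= => /andP[i1 i2] /andP[j1 j2].
  have ij : i%:R * h < j.+1%:R * h by lra.
  have ji : j%:R * h < i.+1%:R * h by lra.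
  rewrite ltr_pM2r // ltr_nat ltnS in ij; rewrite ltr_pM2r // ltr_nat ltnS in ji.
  by apply: val_inj; apply/eqP; rewrite eqn_leq ij ji.
apply: (le_trans _ (lebesgue_measure_subset (_ : \big[setU/set0]_(j < M | P j) cell j `<=` S))).
  rewrite measure_bigsetU_ord_cond // => [|j _]; last exact: measurable_itv.
  by rewrite -sumEFin; apply: lee_sum => j _; exact: cell_h.
by move=> x; rewrite -bigcup_seq_cond => -[j /= /andP[_ Pj]]; exact: cellS.
Qed.

End Measure.

Lemma exists_small_delta {R : realType} (K : R) {eps G alpha delta0 : R} :
  0 < eps -> 0 <= G -> 0 < alpha -> 0 < delta0 ->
  exists delta : R, [/\ 0 < delta, delta <= pi, 2 * delta < delta0 &
    G * (K * (2 * delta) `^ alpha) <= eps / 2].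
Proof.
move=> e0 G0 a0 d0.
pose K1 := `|K| + 1; pose G1 := G + 1.
have K10 : 0 < K1 by rewrite /K1 ltr_pwDr.
have G10 : 0 < G1 by rewrite /G1 ltr_pwDr.
pose T := eps / (2 * G1 * K1).
have T0 : 0 < T by rewrite /T divr_gt0 // !mulr_gt0.
have Tp0 : 0 < T `^ alpha^-1 by rewrite powR_gt0.
pose d := Num.min (Num.min (delta0 / 4) 1) (T `^ alpha^-1 / 2).
have d_le1 : d <= delta0 / 4 by rewrite /d !ge_min lexx.
have d_le2 : d <= 1 by rewrite /d !ge_min lexx orbT.
have d_le3 : d <= T `^ alpha^-1 / 2 by rewrite /d ge_min lexx orbT.
have d0' : 0 < d by rewrite /d !lt_min !divr_gt0 // ltr01.
exists d; split => //.
- by apply: le_trans d_le2 _; apply: le_trans _ (pi_ge2 R); lra.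
- lra.
have p1 : (2 * d) `^ alpha <= T.
  have -> : T = (T `^ alpha^-1) `^ alpha.
    by rewrite -powRrM mulVf ?gt_eqF // powRr1 // ltW.
  by apply: ge0_ler_powR; rewrite ?nnegrE ?(ltW a0) ?powR_ge0; lra.
have p2 : K * (2 * d) `^ alpha <= K1 * T.
  apply: le_trans (_ : `|K| * (2 * d) `^ alpha <= _).
    by rewrite ler_wpM2r ?powR_ge0 // ler_norm.
  by apply: ler_pM; rewrite ?powR_ge0 //; rewrite /K1; lra.
apply: le_trans (ler_wpM2l G0 p2) _; apply: le_trans (_ : G1 * (K1 * T) <= _).
  by apply: ler_wpM2r; [rewrite mulr_ge0 // ltW | rewrite /G1 lerDl].
by rewrite le_eqVlt; apply/orP; left; apply/eqP; rewrite /T; field; rewrite !gt_eqF.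
Qed.

Lemma cabs_div_sub1B_le {R : realType} {y y' z z' : R[i]} {k G A B : R} : 0 < k ->
  k <= cabs (z - 1) -> k <= cabs (z' - 1) -> cabs y <= G ->
  cabs (y' - y) <= A -> cabs (z - z') <= B ->
  cabs (y' / (z' - 1) - y / (z - 1)) <= A / k + G * B / k ^+ 2.
Proof.
move=> k0 kz kz' yG dyA dzB.
have nz w : k <= cabs (w - 1) -> w - 1 != 0.
  by move=> kw; apply/eqP => w1; move: kw; rewrite w1 cabs0; lra.
have inv_le w : k <= cabs (w - 1) -> cabs (w - 1)^-1 <= k^-1.
  by move=> kw; rewrite cabsV lef_pV2 ?posrE // (lt_le_trans k0).
have -> : y' / (z' - 1) - y / (z - 1) =
    (y' - y) * (z' - 1)^-1 + y * (z - z') * ((z' - 1)^-1 * (z - 1)^-1).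
  by field; rewrite !nz.
apply: le_trans (cabsD _ _) _; rewrite !cabsM.
have k'0 : 0 <= k^-1 by rewrite invr_ge0 ltW.
apply: lerD; first by rewrite ler_pM ?cabs_ge0 ?inv_le.
rewrite expr2 invfM; apply: ler_pM; rewrite ?mulr_ge0 ?cabs_ge0 //.
  by rewrite ler_pM ?cabs_ge0.
by rewrite ler_pM ?cabs_ge0 ?inv_le.
Qed.

Definition phase_sum {R : realType} (I : R -> R) (g : R -> R[i]) (N m n : nat) : R[i] :=
  \sum_(m <= x < n) expi (N%:R * I (x%:R / N%:R)) * g (x%:R / N%:R).

Section PhaseSums.
Context {R : realType}.
Context {a b : R} {I J : R -> R} {g : R -> R[i]} {LJ Lg G : R}.
Hypotheses (a_ge0 : 0 <= a) (ab : a < b).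
Hypotheses (LJ_ge0 : 0 <= LJ) (Lg_ge0 : 0 <= Lg) (G_ge0 : 0 <= G).
Hypothesis I_cont : {within `[a, b], continuous I}.
Hypothesis I_der : {in `]a, b[, forall x, derivable I x 1}.
Hypothesis J_eq : {in `]a, b[, forall x, J x = derive1 I x}.
Hypothesis J_lip : {in `[a, b] &, forall s t, `|J s - J t| <= LJ * `|s - t|}.
Hypothesis g_lip : {in `[a, b] &, forall s t, cabs (g s - g t) <= Lg * `|s - t|}.
Hypothesis g_bound : {in `[a, b], forall t, cabs (g t) <= G}.

Lemma I_increment_linear {s t} : s \in `[a, b] -> t \in `[a, b] -> s <= t ->
  `|I t - I s - J s * (t - s)| <= LJ * (t - s) ^+ 2.
Proof.
move=> sab tab st.
have der x : x \in `]s, t[ -> is_derive x 1 I (J x).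
  move=> xst; have xab := subitv_oo_in sab tab _ xst.
  by rewrite J_eq // derive1E; exact/derivableP/I_der.
have [xi xist ->] :=
  MVT_segment st der (continuous_subspaceW (subitv_cc_in sab tab) I_cont).
have xiab : xi \in `[a, b] := subitv_cc_in sab tab _ xist.
rewrite -mulrBl normrM [`|t - s|]ger0_norm ?subr_ge0 // expr2 mulrA ler_wpM2r ?subr_ge0 //.
apply: le_trans (J_lip _ _ xiab sab) _; rewrite ler_wpM2l // ger0_norm ?lerD2r ?subr_ge0;
  by move: xist; rewrite in_itv /= => /andP[].
Qed.

Let phase_step (N : nat) (s : R) := N%:R * (I (s + N%:R^-1) - I s).

Lemma phase_step_near_J {N s} : (0 < N)%N ->
  s \in `[a, b] -> s + N%:R^-1 \in `[a, b] -> `|phase_step N s - J s| <= LJ / N%:R.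
Proof.
move=> N0 sab s'ab; have N0' : 0 < (N%:R : R) by rewrite ltr0n.
have h_eq : s + N%:R^-1 - s = N%:R^-1 by rewrite addrAC subrr add0r.
have := I_increment_linear sab s'ab; rewrite h_eq lerDl invr_ge0 ler0n.
move=> /(_ isT) lin.
have -> : phase_step N s - J s = N%:R * (I (s + N%:R^-1) - I s - J s * N%:R^-1).
  by rewrite /phase_step; field; rewrite gt_eqF.
rewrite normrM ger0_norm ?ler0n //; apply: le_trans (ler_wpM2l (ltW N0') lin) _.
by rewrite le_eqVlt; apply/orP; left; apply/eqP; field; rewrite gt_eqF.
Qed.

Lemma phase_step_far_from_1 N s kap : (0 < N)%N -> 4 * LJ <= kap * N%:R ->
  s \in `[a, b] -> s + N%:R^-1 \in `[a, b] -> kap <= cabs (expi (J s) - 1) ->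
  kap / 2 <= cabs (expi (phase_step N s) - 1).
Proof.
move=> N0 hN sab s'ab far; have N0' : 0 < (N%:R : R) by rewrite ltr0n.
have near := phase_step_near_J N0 sab s'ab; rewrite distrC in near.
have := cabs_expiB (J s) (phase_step N s).
have := cabsD (expi (J s) - expi (phase_step N s)) (expi (phase_step N s) - 1).
rewrite addrA subrK.
have : LJ / N%:R <= kap / 4 by rewrite ler_pdivrMr // mulrAC; lra.
lra.
Qed.

Lemma phase_step_lipschitz N s : (0 < N)%N -> s \in `[a, b] -> s + N%:R^-1 \in `[a, b] ->
  s + N%:R^-1 + N%:R^-1 \in `[a, b] ->
  `|phase_step N s - phase_step N (s + N%:R^-1)| <= 3 * (LJ / N%:R).
Proof.
move=> N0 s0 s1 s2.
have d0 := phase_step_near_J N0 s0 s1.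
have d1 := phase_step_near_J N0 s1 s2.
have dJ := J_lip _ _ s0 s1.
have h_eq : `|s - (s + N%:R^-1)| = N%:R^-1.
  by rewrite opprD addrA subrr add0r normrN ger0_norm ?invr_ge0 ?ler0n.
rewrite h_eq in dJ.
have -> : phase_step N s - phase_step N (s + N%:R^-1) =
    (phase_step N s - J s) + (J s - J (s + N%:R^-1))
    - (phase_step N (s + N%:R^-1) - J (s + N%:R^-1)).
  by ring.
apply: le_trans (ler_normB _ _) _; apply: le_trans (lerD (ler_normD _ _) (lexx _)) _.
lra.
Qed.

Let abel_rate (k : R) := Lg / k + G * (6 * LJ) / k ^+ 2.

Lemma abel_rate_ge0 {k} : 0 < k -> 0 <= abel_rate k.
Proof. by move=> /ltW k0; rewrite addr_ge0 ?divr_ge0 ?mulr_ge0 ?exprn_ge0 ?ler0n. Qed.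

(* With v x := e^{i N I(x/N)} we have v (x+1) = v x * e^{i phase_step}, so writing
   g(x/N) = q x * (e^{i phase_step} - 1) turns the phase sum into an Abel sum. *)
Lemma phase_sum_abel_le {N m n k} : (0 < N)%N -> 0 < k ->
  (forall x, (m <= x <= n)%N -> x%:R / N%:R \in `[a, b]) ->
  (forall x, (m <= x < n)%N -> k <= cabs (expi (phase_step N (x%:R / N%:R)) - 1)) ->
  cabs (phase_sum I g N m n) <= 2 * (G / k) + (n - m)%:R * (abel_rate k / N%:R).
Proof.
move=> N0 k0 t_ab step_far; have N0' : 0 < (N%:R : R) by rewrite ltr0n.
pose t x := x%:R / N%:R : R.
have tS x : t x.+1 = t x + N%:R^-1 by exact: sampleS.
have nz x : (m <= x < n)%N -> expi (phase_step N (t x)) - 1 != 0.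
  by move=> /step_far kle; apply/eqP => e; move: kle; rewrite e cabs0; lra.
pose v x := expi (N%:R * I (t x)).
pose q x := g (t x) / (expi (phase_step N (t x)) - 1).
have v_step x : v x.+1 = v x * expi (phase_step N (t x)).
  by rewrite /v tS -expiD /phase_step; congr expi; ring.
rewrite /phase_sum.
apply: (cabs_abel_sum_le v (fun x => g (t x)) q m n (G / k) (abel_rate k / N%:R)).
- by rewrite divr_ge0 ?(ltW k0).
- by rewrite divr_ge0 ?abel_rate_ge0.
- by move=> x; exact: cabs_expi.
- by move=> x xmn; rewrite v_step /q; field; exact: nz.
- move=> x xmn; rewrite /q cabsM cabsV; apply: ler_pM; rewrite ?invr_ge0 ?cabs_ge0 //.
    by apply: g_bound; apply: t_ab; case/andP: xmn => -> /ltnW.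
  by rewrite lef_pV2 ?posrE ?step_far // (lt_le_trans k0) ?step_far.
move=> x mx x2n; have x1n := ltnW x2n.
have x_in : (m <= x <= n)%N by rewrite mx ltnW.
have x1_in : (m <= x.+1 <= n)%N by rewrite leqW.
have x2_in : (m <= x.+2 <= n)%N by rewrite !leqW.
have dg : cabs (g (t x.+1) - g (t x)) <= Lg / N%:R.
  rewrite (le_trans (g_lip _ _ (t_ab _ x1_in) (t_ab _ x_in))) // sampleS addrAC subrr add0r.
  by rewrite ger0_norm ?invr_ge0 ?ler0n.
have dz : cabs (expi (phase_step N (t x)) - expi (phase_step N (t x.+1)))
    <= 2 * (3 * (LJ / N%:R)).
  apply: le_trans (cabs_expiB _ _) _; rewrite ler_pM2l // tS.
  by apply: phase_step_lipschitz; rewrite -?tS ?t_ab.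
apply: le_trans (cabs_div_sub1B_le k0 (step_far _ _) (step_far _ _)
  (g_bound _ (t_ab _ x_in)) dg dz) _; rewrite ?mx ?x1n ?leqW //.
by rewrite le_eqVlt; apply/orP; left; apply/eqP; rewrite /abel_rate; field; rewrite !gt_eqF.
Qed.

(* The last sample of a cell is split off: its phase increment involves the
   next sample, which may lie beyond the cell. *)
Lemma phase_sum_good_cell_bound {kap} : 0 < kap ->
  exists2 C, 0 <= C & forall N c c', (0 < N)%N -> 4 * LJ <= kap * N%:R ->
    a <= c -> c <= c' -> c' <= b ->
    {in `[c, c'], forall t, kap <= cabs (expi (J t) - 1)} ->
    cabs (phase_sum I g N (first_after N c) (first_after N c')) <= C.
Proof.
move=> kap0; have k0 : 0 < kap / 2 by rewrite divr_gt0.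
have D0 := abel_rate_ge0 k0.
have ba1 : 0 <= b - a + 1 by rewrite addr_ge0 ?subr_ge0 ?ltW.
exists (2 * (G / (kap / 2)) + (b - a + 1) * abel_rate (kap / 2) + G).
  by rewrite !addr_ge0 ?mulr_ge0 ?invr_ge0 ?ler0n ?(ltW k0).
move=> N c c' N0 hN ac cc' c'b far.
have N0' : 0 < (N%:R : R) by rewrite ltr0n.
have c0 : 0 <= c by apply: le_trans ac.
have n1 : first_after N c' = (Num.truncn (c' * N%:R)).+1 by rewrite /first_after addn1.
have t_in x : (first_after N c <= x <= Num.truncn (c' * N%:R))%N ->
    x%:R / N%:R \in `[c, c'].
  move=> /andP[mx xn]; rewrite in_itv /=.
  have /andP[cx ->] : c < x%:R / N%:R <= c'.
    by apply: (sample_in_itv N0 c0 (le_trans c0 cc')); rewrite n1 ltnS mx xn.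
  by rewrite (ltW cx).
have := card_first_after N c0 cc'; rewrite n1; move: t_in.
move: (first_after N c) (Num.truncn (c' * N%:R)) => m n t_in card_mn.
have t_ab x : (m <= x <= n)%N -> x%:R / N%:R \in `[a, b].
  move=> /t_in; rewrite !in_itv /= => /andP[cx xc'].
  by rewrite (le_trans ac cx) (le_trans xc' c'b).
have [mn|nm] := leqP m n; last first.
  by rewrite /phase_sum big_geq // cabs0 !addr_ge0 ?mulr_ge0 ?invr_ge0 ?ler0n ?(ltW k0).
rewrite /phase_sum big_nat_recr //=; apply: le_trans (cabsD _ _) _; apply: lerD; last first.
  by rewrite cabsM cabs_expi mul1r g_bound // t_ab // mn leqnn.
apply: le_trans (phase_sum_abel_le N0 k0 t_ab _) _ => [x /andP[mx xn]|].
  have x_in : (m <= x <= n)%N by rewrite mx ltnW.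
  have x1_in : (m <= x.+1 <= n)%N by rewrite leqW.
  by apply: phase_step_far_from_1; rewrite -?sampleS ?t_ab ?far ?t_in.
have cnt : ((n - m)%:R : R) <= (b - a + 1) * N%:R.
  apply: le_trans (_ : ((n.+1 - m)%:R : R) <= _); first by rewrite ler_nat leq_sub2r.
  apply: le_trans card_mn _; rewrite [leRHS]mulrDl mul1r lerD ?ler1n // ler_wpM2r ?ler0n //.
  lra.
by rewrite lerD2l mulrCA [leRHS]mulrC ler_wpM2l // ler_pdivrMr.
Qed.

Lemma phase_sum_trivial_bound {N c c'} : (0 < N)%N -> a <= c -> c <= c' -> c' <= b ->
  cabs (phase_sum I g N (first_after N c) (first_after N c')) <= ((c' - c) * N%:R + 1) * G.
Proof.
move=> N0 ac cc' c'b; have c0 := le_trans a_ge0 ac.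
rewrite /phase_sum; apply: le_trans (cabs_sum_nat_le G _) _ => [x xcc'|].
  have /andP[cx xc'] := sample_in_itv N0 c0 (le_trans c0 cc') xcc'.
  by rewrite cabsM cabs_expi mul1r g_bound // in_itv /= (le_trans ac (ltW cx)) (le_trans xc' c'b).
by rewrite ler_wpM2r // card_first_after.
Qed.

Let cell_pt (h : R) (j : nat) := a + j%:R * h.

Let cell_near_2piZ (delta h : R) (j : nat) : bool :=
  `[< exists2 t, cell_pt h j <= t <= cell_pt h j.+1 &
        exists k : int, `|J t - 2 * pi * k%:~R| <= delta >].

Lemma cell_pt_in {h M j} : 0 < h -> cell_pt h M = b -> (j <= M)%N -> a <= cell_pt h j <= b.
Proof.
move=> h0 hM jM; rewrite -hM /cell_pt lerDl lerD2l mulr_ge0 ?(ltW h0) //=.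
by rewrite ler_wpM2r ?ler_nat ?(ltW h0).
Qed.

Lemma bad_cells_length {delta h M} : 0 < h -> cell_pt h M = b -> LJ * h <= delta ->
  ((\sum_(j < M | cell_near_2piZ delta h j) h)%:E
     <= lebesgue_measure (near_2piZ_set a b I (2 * delta)))%E.
Proof.
move=> h0 hM LJh; apply: (cells_length_le_measure a) => // j /asboolP[t /andP[t1 t2] [k tk]] s.
rewrite /= in_itv /= => /andP[s1 s2].
have /andP[aj _] := cell_pt_in h0 hM (ltnW (ltn_ord j)).
have /andP[_ jb] := cell_pt_in h0 hM (ltn_ord j).
have hS : cell_pt h j.+1 = cell_pt h j + h by rewrite /cell_pt -addn1 natrD mulrDl mul1r addrA.
rewrite hS /cell_pt in t2 jb s2; rewrite /cell_pt in t1 aj s1.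
have sab : s \in `]a, b[ by rewrite in_itv /=; apply/andP; split; lra.
have sab' : s \in `[a, b] by rewrite in_itv /=; apply/andP; split; lra.
have tab : t \in `[a, b] by rewrite in_itv /=; apply/andP; split; lra.
split => //; exists k; rewrite -J_eq //.
have st : `|s - t| <= h by rewrite ler_norml; apply/andP; split; lra.
have := J_lip _ _ sab' tab; have := ler_wpM2l LJ_ge0 st.
have := ler_normD (J s - J t) (J t - 2 * pi * k%:~R); rewrite addrA subrK; lra.
Qed.

Lemma fine_partition {delta} : 0 < delta ->
  exists M h, [/\ 0 < h, cell_pt h M = b & LJ * h <= delta].
Proof.
move=> delta0; pose M := (Num.truncn (LJ * (b - a) / delta)).+1.
have M0 : 0 < (M%:R : R) by rewrite ltr0n.
exists M, ((b - a) / M%:R); split; first by rewrite divr_gt0 ?subr_gt0.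
  by rewrite /cell_pt mulrC divfK ?gt_eqF // addrC subrK.
have := truncnS_gt (LJ * (b - a) / delta); rewrite ltr_pdivrMr // => lt_M.
by rewrite mulrA ler_pdivrMr // [delta * _]mulrC ltW.
Qed.

Lemma cell_phase_sum_le {delta h M C N} (j : 'I_M) :
  0 < delta <= pi -> 0 < h -> cell_pt h M = b -> 0 <= C -> (0 < N)%N ->
  4 * LJ <= cabs (expi delta - 1) * N%:R ->
  (forall c c', a <= c -> c <= c' -> c' <= b ->
     {in `[c, c'], forall t, cabs (expi delta - 1) <= cabs (expi (J t) - 1)} ->
     cabs (phase_sum I g N (first_after N c) (first_after N c')) <= C) ->
  cabs (phase_sum I g N (first_after N (cell_pt h j)) (first_after N (cell_pt h j.+1)))
    <= C + G + (if cell_near_2piZ delta h j then h * (N%:R * G) else 0).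
Proof.
move=> delta_pi h0 hM C0 N0 hN good.
have /andP[aj _] := cell_pt_in h0 hM (ltnW (ltn_ord j)).
have /andP[_ jb] := cell_pt_in h0 hM (ltn_ord j).
have cellS : cell_pt h j.+1 = cell_pt h j + h.
  by rewrite /cell_pt -addn1 natrD mulrDl mul1r addrA.
have jj : cell_pt h j <= cell_pt h j.+1 by rewrite cellS lerDl (ltW h0).
case: ifPn => [_|not_near].
  apply: le_trans (phase_sum_trivial_bound N0 aj jj jb) _.
  by rewrite cellS addrAC subrr add0r mulrDl mul1r -mulrA; lra.
rewrite addr0; apply: le_trans (good _ _ aj jj jb _) _; last by rewrite lerDl.
move=> t tj; apply: cabs_expi_sub1_far => // -[k tk]; move/negP: not_near; apply.
by apply/asboolP; exists t => //; exists k.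
Qed.

Lemma phase_sum_littleo {K alpha delta0} : 0 < alpha -> 0 < delta0 ->
  (forall delta, 0 < delta -> delta < delta0 ->
     (lebesgue_measure (near_2piZ_set a b I delta) <= (K * delta `^ alpha)%:E)%E) ->
  forall eps, 0 < eps -> \forall N \near \oo,
    cabs (phase_sum I g N (first_after N a) (first_after N b)) <= eps * N%:R.
Proof.
move=> alpha0 delta0_gt0 meas eps eps0.
have [delta [delta_gt0 delta_le_pi delta_lt small]] :=
  exists_small_delta K eps0 G_ge0 alpha0 delta0_gt0.
have delta_pi : 0 < delta <= pi by rewrite delta_gt0 delta_le_pi.
have kap0 := cabs_expi_sub1_gt0 delta_pi.
have [C C0 good] := phase_sum_good_cell_bound kap0.
have [M [h [h0 hM LJh]]] := fine_partition delta_gt0.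
have bad_len : \sum_(j < M | cell_near_2piZ delta h j) h <= K * (2 * delta) `^ alpha.
  rewrite -lee_fin; apply: le_trans (bad_cells_length h0 hM LJh) (meas _ _ _) => //.
  by rewrite mulr_gt0.
near=> N.
have N0 : (0 < N)%N by near: N; exact: nbhs_infty_gt.
have N0' : 0 < (N%:R : R) by rewrite ltr0n.
have hN : 4 * LJ / cabs (expi delta - 1) <= N%:R by near: N; exact: nbhs_infty_ger.
have hB : 2 * (M%:R * (C + G)) / eps <= N%:R by near: N; exact: nbhs_infty_ger.
rewrite ler_pdivrMr // [N%:R * _]mulrC in hN.
pose p j := first_after N (cell_pt h j).
have p_mono j : (p j <= p j.+1)%N.
  rewrite /p first_after_le ?addr_ge0 ?mulr_ge0 ?ler0n ?(ltW h0) //.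
  by rewrite /cell_pt -addn1 natrD mulrDl mul1r addrA lerDl (ltW h0).
have -> : first_after N a = p 0%N by rewrite /p /cell_pt mulr0n mul0r addr0.
have -> : first_after N b = p M by rewrite /p hM.
rewrite /phase_sum (big_nat_split_mono p_mono); apply: le_trans (cabs_sum _ _ _ _) _.
apply: le_trans (ler_sum _ (fun j _ =>
  cell_phase_sum_le j delta_pi h0 hM C0 N0 hN (fun c c' => good N c c' N0 hN))) _.
rewrite big_split /= sumr_const card_ord -big_mkcond /= -mulr_suml.
have bad_part : (\sum_(j < M | cell_near_2piZ delta h j) h) * (N%:R * G) <= eps / 2 * N%:R.
  apply: le_trans (ler_wpM2r (mulr_ge0 (ltW N0') G_ge0) bad_len) _.
  by rewrite mulrCA [_ * G]mulrC [leRHS]mulrC ler_wpM2l ?ler0n.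
have good_part : (C + G) *+ M <= eps / 2 * N%:R.
  by rewrite -mulr_natl; rewrite ler_pdivrMr // in hB; nra.
lra.
Unshelve. all: by end_near.
Qed.

End PhaseSums.

Lemma cabs_sum_le_phase_sum {R : realType} {a b : R} {I : R -> R} {g : R -> R[i]}
    {f : nat -> R[i]} {N : nat} {P eta : R} :
  (0 < N)%N -> 0 <= a -> a <= b -> 0 <= P -> 0 <= eta ->
  (forall t, t \in `[a, b] ->
     cabs (f (Num.truncn (t * N%:R)) - expi (N%:R * I t) * g t * (P%:C)%C) <= eta * P) ->
  cabs (\sum_(first_after N a <= x < first_after N b) f x)
    <= (b - a + 1) * N%:R * (eta * P)
       + cabs (phase_sum I g N (first_after N a) (first_after N b)) * P.
Proof.
move=> N0 a0 ab P0 eta0 hf; have N1 : 1 <= (N%:R : R) by rewrite ler1n.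
set S := phase_sum I g N _ _.
have := cabsD (\sum_(first_after N a <= x < first_after N b) f x - S * (P%:C)%C) (S * (P%:C)%C).
rewrite subrK => /le_trans; apply; rewrite cabsM cabs_real ger0_norm // lerD2r.
rewrite /S /phase_sum mulr_suml -sumrB.
apply: le_trans (cabs_sum_nat_le (eta * P) _) _ => [x xab|].
  have /andP[ax xb] := sample_in_itv N0 a0 (le_trans a0 ab) xab.
  by have := hf (x%:R / N%:R); rewrite truncn_sample // in_itv /= (ltW ax) xb; apply.
rewrite ler_wpM2r ?mulr_ge0 //; apply: le_trans (card_first_after N a0 ab) _.
by rewrite [leRHS]mulrDl mul1r lerD2l.
Qed.

Theorem proposition4p2 (R : realType) (a b d : R) (g : R -> R[i]) (I : R -> R)
    (f : nat -> R[i]) :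
  0 <= a -> a < b ->
  C1_on_cplx a b g ->
  C2_on a b I ->
  (exists alpha : R, 0 < alpha /\
     exists (K : R) (delta0 : R), 0 < delta0 /\
       forall delta : R, 0 < delta -> delta < delta0 ->
         (lebesgue_measure (near_2piZ_set a b I delta)
            <= (K * delta `^ alpha)%:E)%E) ->
  (forall eps : R, 0 < eps ->
     \forall N \near \oo,
       forall t : R, t \in `[a, b] ->
         cabs (f (Num.truncn (t * N%:R))
                - expi (N%:R * I t) * g t * ((N%:R `^ d)%:C)%C)
         <= eps * N%:R `^ d) ->
  forall eps : R, 0 < eps ->
    \forall N \near \oo,
      cabs (\sum_(Num.truncn (a * N%:R) + 1 <= x < Num.truncn (b * N%:R) + 1)
               f x)
      <= eps * N%:R `^ (d + 1).
Proof.
move=> a0 ab g_C1 [I_C1 [J [J_eq J_C1]]] [alpha [alpha0 [K [delta0 [delta0_gt0 meas]]]]].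
move=> hf eps eps0; have [I_cont [I_der _]] := I_C1.
have [LJ LJ0 J_lip] := C1_on_lipschitz (ltW ab) J_C1.
have [Lg Lg0 g_lip] := C1_on_cplx_lipschitz (ltW ab) g_C1.
have [G G0 g_bound] := C1_on_cplx_bounded (ltW ab) g_C1.
have main := phase_sum_littleo a0 ab LJ0 Lg0 G0 I_cont I_der J_eq J_lip g_lip g_bound
  alpha0 delta0_gt0 meas _ (divr_gt0 eps0 (ltr0n _ 2)).
pose eta := eps / (2 * (b - a + 1)).
have eta0 : 0 < eta by rewrite divr_gt0 // mulr_gt0 // ltr_pwDr // subr_ge0 ltW.
apply: filterS3 (hf eta eta0) main (nbhs_infty_gt 0) => N hfN mainN N0.
have P0 : 0 <= N%:R `^ d by rewrite powR_ge0.
have -> : N%:R `^ (d + 1) = N%:R `^ d * N%:R.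
  rewrite powRD; last by apply/implyP => _; rewrite gt_eqF // ltr0n.
  by rewrite powRr1 // ler0n.
apply: le_trans (cabs_sum_le_phase_sum N0 a0 (ltW ab) P0 (ltW eta0) hfN) _.
have ba1 : b - a + 1 != 0 by rewrite gt_eqF // ltr_pwDr // subr_ge0 ltW.
apply: le_trans (lerD (lexx _) (ler_wpM2r P0 mainN)) _.
by rewrite le_eqVlt; apply/orP; left; apply/eqP; rewrite /eta; field.
Qed.
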